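(* Let $C$ be a subscription subtask with worst-case response time $R_C$ that is the only subscriber of a topic, and let its parents $A, B, \dots$ (the subtasks publishing to that topic) have worst-case response times $R_A, R_B, \dots$. Suppose the task set containing $A, B, C, \dots$ is strictly periodic, the parents' periods are harmonic, and the phase shift is sufficient in the following sense: for each pair of parents $A, B$, $$t_{RA} + R_A + R_C \leq t_{RB}, \qquad t_{RB} + R_B + R_C \leq t_{RA} + T_A,$$ where $t_{Rx}$ denotes a release time of $x$, these occurring at the time points $\phi_x + kT_x$, $k \in \mathbb{N}$, with $\phi_x$ the phase and $T_x$ the period of $x$. Then the message queue for that subscription's topic never contains more than one message.
   Context: Setting: a ROS~2 application on a single processor in which subtasks (callbacks) communicate via publish-subscribe topics. Each execution of a parent publishes one message to the topic, which is enqueued in the subscription's message queue and releases one job of the subscription $C$ immediately when the parent completes; that message is removed from the queue when the corresponding job of $C$ is executed. The response time of a job is the time from its release to its completion; $R_x$ is an upper bound on the response time of jobs of $x$. *)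

From mathcomp Require Import all_boot all_order all_algebra.
Set Implicit Arguments. Unset Strict Implicit. Unset Printing Implicit Defensive.
Import Order.TTheory GRing.Theory Num.Theory.
Local Open Scope ring_scope.

Section Defs.
Variables (R : realFieldType) (P : Type).

Definition release (phi T : P -> R) (x : P) (k : nat) : R := phi x + k%:R * T x.

Definition is_release (phi T : P -> R) (x : P) (t : R) : Prop :=
  exists k : nat, t = release phi T x k.

Definition harmonic (T : P -> R) : Prop :=
  forall x y : P, exists n : nat, T y = n%:R * T x \/ T x = n%:R * T y.

Definition sufficient_phase_shift (phi T Rp : P -> R) (RC : R) : Prop :=
  forall A B : P, A <> B ->
    exists tA tB : R, is_release phi T A tA /\ is_release phi T B tB /\
      tA + Rp A + RC <= tB /\ tB + Rp B + RC <= tA + T A.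

(* The message published by job k of parent x is in the queue at time t:
   it was enqueued at the completion time fin x k of that job, and it is
   removed at time rem x k (when the corresponding job of C executes). *)
Definition in_queue (fin rem : P -> nat -> R) (t : R) (x : P) (k : nat) : Prop :=
  fin x k <= t /\ t < rem x k.

End Defs.

(** A message published by job k of parent x can be in the queue only during
    the window [r, r + R_x + R_C) that starts at the release r of that job.
    The phase-shift conditions for a pair x, y force R_x + R_C <= T_x, so the
    windows of a single parent are pairwise disjoint.  When T_y is a multiple
    of T_x, every release of y lies on the grid phi_y + Z T_x; the phase-shift
    condition at one pair of releases therefore places every window of y in
    the gap between two consecutive windows of x. *)
From Stdlib Require Import Classical.
From mathcomp Require Import all_boot all_order all_algebra.
From mathcomp Require Import zify lra.
Import Order.TTheory GRing.Theory Num.Theory.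
Set Implicit Arguments.
Unset Strict Implicit.
Unset Printing Implicit Defensive.

Local Open Scope ring_scope.

Lemma exists_neq (P : Type) (A B x : P) : A <> B -> exists y, x <> y.
Proof.
move=> AB; case: (classic (x = A)) => [->|xA]; first by exists B.
by exists A.
Qed.

Section Progressions.
Variables (R : realFieldType) (T : R).
Hypothesis T_gt0 : 0 < T.

Lemma progression_index_lt (a t : R) (i j : nat) :
  a + i%:R * T <= t -> t < a + j%:R * T -> (i < j)%N.
Proof. by move=> hi hj; rewrite -(ltr_nat R) -(ltr_pM2r T_gt0); lra. Qed.

Lemma progression_window_unique (a W t : R) (k l : nat) :
  W <= T ->
  a + k%:R * T <= t < a + k%:R * T + W ->
  a + l%:R * T <= t < a + l%:R * T + W -> k = l.
Proof.
move=> WT /andP[k1 k2] /andP[l1 l2].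
have : (k < l + 1)%N by apply: (progression_index_lt k1); rewrite natrD; lra.
have : (l < k + 1)%N by apply: (progression_index_lt l1); rewrite natrD; lra.
lia.
Qed.

Lemma interleaved_windows_disjoint (a b W V t : R) (i0 j0 i j : nat) :
  a + i0%:R * T + W <= b + j0%:R * T ->
  b + j0%:R * T + V <= a + i0%:R * T + T ->
  a + i%:R * T <= t < a + i%:R * T + W ->
  b + j%:R * T <= t < b + j%:R * T + V -> False.
Proof.
move=> ab ba /andP[x1 x2] /andP[y1 y2].
(* Shift t by the reference offsets so that each comparison of window ends
   becomes a comparison of two points of a single progression. *)
have : (j + i0 < j0 + i)%N.
  apply: (@progression_index_lt b (t + i0%:R * T) (j + i0)%N).
    by rewrite natrD; lra.
  by rewrite natrD; lra.
have : (i + j0 < j + i0 + 1)%N.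
  apply: (@progression_index_lt a (t + j0%:R * T) (i + j0)%N).
    by rewrite natrD; lra.
  by rewrite !natrD; lra.
lia.
Qed.
End Progressions.

Section Queue.
Variables (R : realFieldType) (P : Type) (phi T Rp : P -> R) (RC : R).
Variables (fin cfin rem : P -> nat -> R).
Hypothesis T_gt0 : forall x, 0 < T x.
Hypothesis fin_window :
  forall x k, release phi T x k <= fin x k <= release phi T x k + Rp x.
Hypothesis cfin_window : forall x k, fin x k <= cfin x k <= fin x k + RC.
Hypothesis rem_window : forall x k, fin x k <= rem x k <= cfin x k.
Hypothesis phase_shift : sufficient_phase_shift phi T Rp RC.

Lemma in_queue_release_window t x k :
  in_queue fin rem t x k ->
  release phi T x k <= t < release phi T x k + (Rp x + RC).
Proof.
move=> [fin_t t_rem]; have /andP[r1 r2] := fin_window x k.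
have /andP[c1 c2] := cfin_window x k; have /andP[m1 m2] := rem_window x k.
by apply/andP; split; lra.
Qed.

Lemma response_bound_ge0 x : 0 <= Rp x + RC.
Proof.
have /andP[r1 r2] := fin_window x 0; have /andP[c1 c2] := cfin_window x 0.
lra.
Qed.

Lemma response_bound_le_period x y : x <> y -> Rp x + RC <= T x.
Proof.
move=> xy; have [tx [ty [_ [_ [xy_shift yx_shift]]]]] := phase_shift xy.
have := response_bound_ge0 y; lra.
Qed.

Lemma queue_index_unique x y t k l : x <> y ->
  in_queue fin rem t x k -> in_queue fin rem t x l -> k = l.
Proof.
move=> xy /in_queue_release_window qk /in_queue_release_window ql.
rewrite /release in qk ql.
exact: (progression_window_unique (T_gt0 x) (response_bound_le_period xy) qk ql).
Qed.

Lemma queue_parents_disjoint x y t k l (n : nat) :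
  x <> y -> T y = n%:R * T x ->
  in_queue fin rem t x k -> in_queue fin rem t y l -> False.
Proof.
move=> xy Ty /in_queue_release_window qx /in_queue_release_window qy.
have [_ [_ [[k0 ->] [[m0 ->] [xy_shift yx_shift]]]]] := phase_shift xy.
rewrite /release Ty in qx qy xy_shift yx_shift.
rewrite !mulrA -!natrM in qy xy_shift yx_shift.
rewrite -[_ + Rp x + RC]addrA in xy_shift.
rewrite -[_ + Rp y + RC]addrA in yx_shift.
exact: (interleaved_windows_disjoint (T_gt0 x) xy_shift yx_shift qx qy).
Qed.

End Queue.

Theorem lemma7 (R : realFieldType) (P : Type)
    (phi T Rp : P -> R) (RC : R)
    (fin cfin rem : P -> nat -> R) :
  (* the topic has (at least) two distinct parents A, B *)
  (exists A B : P, A <> B) ->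
  (* strictly periodic parents with positive periods *)
  (forall x : P, 0 < T x) ->
  (* each job of parent x completes (publishing its message, which also
     releases one job of C) within its response-time bound R_x *)
  (forall (x : P) (k : nat),
      release phi T x k <= fin x k <= release phi T x k + Rp x) ->
  (* the job of C released at fin x k completes at cfin x k, within R_C *)
  (forall (x : P) (k : nat), fin x k <= cfin x k <= fin x k + RC) ->
  (* the message is removed when that job of C executes *)
  (forall (x : P) (k : nat), fin x k <= rem x k <= cfin x k) ->
  harmonic T ->
  sufficient_phase_shift phi T Rp RC ->
  (* the queue never holds more than one message *)
  forall (t : R) (x y : P) (k l : nat),
    in_queue fin rem t x k -> in_queue fin rem t y l -> x = y /\ k = l.
Proof.
move=> [A [B AB]] T_gt0 fin_w cfin_w rem_w harmonic_T phase t x y k l.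
case: (classic (x = y)) => [<- | xy] qx qy.
  split=> //; have [z xz] := exists_neq x AB.
  exact: (queue_index_unique T_gt0 fin_w cfin_w rem_w phase xz qx qy).
have [n [Ty | Tx]] := harmonic_T x y.
- by case: (queue_parents_disjoint T_gt0 fin_w cfin_w rem_w phase xy Ty qx qy).
- by case: (queue_parents_disjoint T_gt0 fin_w cfin_w rem_w phase
    (nesym xy) Tx qy qx).
Qed.
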